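(* Let $q$ be a prime power and let $f,g:\mathbb{N}\to\mathbb{C}$ be functions, neither identically zero, such that \[ g(n)=\sum_{k=1}^{n}\binom{n-1}{k-1}_q f(k)\quad\text{for all } n\in\mathbb{N}. \] Then at least one of $\{n: f(n)\neq0\}$ and $\{n:g(n)\neq 0\}$ is infinite.
   Context: The $q$-binomial coefficient is $\binom{n}{k}_q=\frac{[n]!_q}{[k]!_q[n-k]!_q}$ where $[n]!_q=\prod_{d=1}^n\frac{q^d-1}{q-1}$. *)

From mathcomp Require Import all_boot all_order all_algebra.
From mathcomp Require Import complex reals.
Set Implicit Arguments. Unset Strict Implicit. Unset Printing Implicit Defensive.
Import GRing.Theory Num.Theory.
Local Open Scope ring_scope.

Definition qint (R : realType) (q d : nat) : R[i] := ((q%:R ^+ d - 1) / (q%:R - 1)).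

Definition qfact (R : realType) (q n : nat) : R[i] := \prod_(1 <= d < n.+1) qint R q d.

Definition qbinom (R : realType) (q n k : nat) : R[i] :=
  qfact R q n / (qfact R q k * qfact R q (n - k)%N).

Definition prime_power (q : nat) : Prop :=
  exists p e : nat, [/\ prime p, (0 < e)%N & q = (p ^ e)%N].

From mathcomp Require Import all_boot all_order all_algebra.
From mathcomp Require Import complex reals.
From mathcomp Require Import ring.
From Stdlib Require Import Classical.

Set Implicit Arguments.
Unset Strict Implicit.
Unset Printing Implicit Defensive.
Import GRing.Theory Num.Theory.
Local Open Scope ring_scope.

(* For fixed [k], the Gaussian binomial [[m choose k]_x] equals [Q_k (x ^ m)] for a
   polynomial [Q_k] of degree [k]: a product of [k] linear factors, the [i]-th of
   which interpolates [[m - i]_x] at the points [x ^ m].  So if [f] has finite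
   support, with last nonzero value [f (K + 1)], then [g (m + 1) = P (x ^ m)] for all
   large [m], where [P = sum_k f (k + 1) Q_k] has degree exactly [K] because the [Q_k]
   have distinct degrees.  For [x = q > 1] the points [x ^ m] are pairwise distinct,
   so [P] cannot vanish at all of them: [g] has infinite support. *)

Section GaussianBinomial.
Variables (F : fieldType) (x : F).

Definition gauss_int d : F := (x ^+ d - 1) / (x - 1).
Definition gauss_fact n : F := \prod_(1 <= d < n.+1) gauss_int d.
(* For [n < k] the truncated subtraction makes [gauss_binom n k] a nonzero junk value. *)
Definition gauss_binom n k : F := gauss_fact n / (gauss_fact k * gauss_fact (n - k)).

Hypothesis x_neq0 : x != 0.
Hypothesis x_not_root1 : forall d, (0 < d)%N -> x ^+ d != 1.

Lemma subr1_neq0 : x - 1 != 0.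
Proof. by rewrite subr_eq0 -[x]expr1 x_not_root1. Qed.

Lemma exp_inj : injective (fun m => x ^+ m).
Proof.
suff lt_neq m n : (m < n)%N -> x ^+ m != x ^+ n.
  by move=> m n /= e; case: (ltngtP m n) => // /lt_neq; rewrite e eqxx.
move=> lt_mn; rewrite -(subnK (ltnW lt_mn)) exprD -subr_eq0 -{1}[x ^+ m]mul1r -mulrBl.
by rewrite mulf_neq0 ?expf_neq0 // subr_eq0 eq_sym x_not_root1 ?subn_gt0.
Qed.

Lemma gauss_int_neq0 d : (0 < d)%N -> gauss_int d != 0.
Proof.
by move=> d_gt0; rewrite mulf_neq0 ?invr_eq0 ?subr1_neq0 // subr_eq0 x_not_root1.
Qed.

Lemma gauss_fact_neq0 n : gauss_fact n != 0.
Proof.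
rewrite prodf_seq_neq0; apply/allP => d; rewrite mem_index_iota => /andP[d_gt0 _].
exact: gauss_int_neq0.
Qed.

Lemma gauss_fact_split m j : (j <= m)%N ->
  gauss_fact m = gauss_fact (m - j) * \prod_(i < j) gauss_int (m - i).
Proof.
elim: j => [|j IHj] le_jm; first by rewrite big_ord0 mulr1 subn0.
have fact_S : gauss_fact (m - j) = gauss_fact (m - j.+1) * gauss_int (m - j).
  by rewrite -(subnSK le_jm) /gauss_fact big_nat_recr.
by rewrite (IHj (ltnW le_jm)) big_ord_recr fact_S mulrAC -mulrA.
Qed.

Lemma gauss_binom_falling m j : (j <= m)%N ->
  gauss_binom m j = (\prod_(i < j) gauss_int (m - i)) / gauss_fact j.
Proof.
move=> le_jm; rewrite /gauss_binom (gauss_fact_split le_jm).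
by field; rewrite !gauss_fact_neq0.
Qed.

Definition gauss_int_poly i : {poly F} := (x ^- i / (x - 1)) *: 'X - ((x - 1)^-1)%:P.

Lemma horner_gauss_int_poly i m : (i <= m)%N ->
  (gauss_int_poly i).[x ^+ m] = gauss_int (m - i).
Proof.
move=> le_im; rewrite hornerD hornerN hornerZ hornerX hornerC /gauss_int.
rewrite -{1}(subnK le_im) exprD.
by field; rewrite subr1_neq0 expf_neq0.
Qed.

Lemma size_gauss_int_poly i : size (gauss_int_poly i) = 2.
Proof.
rewrite size_polyDl size_scale ?size_polyX ?mulf_neq0 ?invr_eq0 ?expf_neq0
  ?subr1_neq0 //.
by rewrite size_polyN size_polyC; case: (_ != 0).
Qed.

Definition gauss_binom_poly j : {poly F} :=
  (gauss_fact j)^-1 *: \prod_(i < j) gauss_int_poly i.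

Lemma horner_gauss_binom_poly j m : (j <= m)%N ->
  (gauss_binom_poly j).[x ^+ m] = gauss_binom m j.
Proof.
move=> le_jm; rewrite hornerZ horner_prod gauss_binom_falling // mulrC.
congr (_ * _); apply: eq_bigr => i _; apply: horner_gauss_int_poly.
exact: leq_trans (ltnW (ltn_ord i)) le_jm.
Qed.

Lemma size_gauss_binom_poly j : size (gauss_binom_poly j) = j.+1.
Proof.
rewrite size_scale ?invr_eq0 ?gauss_fact_neq0 // size_prod => [|i _]; last first.
  by rewrite -size_poly_eq0 size_gauss_int_poly.
under eq_bigr do rewrite size_gauss_int_poly.
by rewrite sum_nat_const card_ord muln2 -addnn -addSn addnK.
Qed.

Lemma coef_gauss_binom_poly_neq0 j : (gauss_binom_poly j)`_j != 0.
Proof.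
rewrite -[j in _`_j]/(j.+1.-1) -(size_gauss_binom_poly j) -lead_coefE.
by rewrite lead_coef_eq0 -size_poly_eq0 size_gauss_binom_poly.
Qed.

Lemma poly_exp_roots_eq0 (p : {poly F}) B :
  (forall m, (B <= m)%N -> root p (x ^+ m)) -> p = 0.
Proof.
move=> p_roots; apply: (@roots_geq_poly_eq0 _ _ [seq x ^+ (B + i) | i <- iota 0 (size p)]).
- by apply/allP => _ /mapP[i _ ->]; apply/p_roots/leq_addr.
- by rewrite map_inj_uniq ?iota_uniq // => i j /exp_inj/addnI.
- by rewrite size_map size_iota.
Qed.

Lemma gauss_binom_transform_top_eq0 (a : nat -> F) K B :
  (forall k, (K < k)%N -> a k = 0) ->
  (forall m, (B <= m)%N -> \sum_(k < m.+1) gauss_binom m k * a k = 0) ->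
  a K = 0.
Proof.
move=> a_supp transform0.
pose P := \sum_(k < K.+1) a k *: gauss_binom_poly k.
have P_eq0 : P = 0.
  apply: (@poly_exp_roots_eq0 _ (B + K)) => m le_m; apply/rootP.
  have le_Km : (K < m.+1)%N by rewrite ltnS (leq_trans (leq_addl _ _) le_m).
  rewrite -(transform0 m (leq_trans (leq_addr _ _) le_m)) horner_sum.
  rewrite (big_ord_widen _ (fun k => (a k *: gauss_binom_poly k).[x ^+ m]) le_Km).
  rewrite big_mkcond /=; apply: eq_bigr => k _.
  case: ltnP => [le_kK | lt_Kk]; last by rewrite a_supp ?mulr0.
  by rewrite hornerZ mulrC horner_gauss_binom_poly // -ltnS (leq_trans le_kK).
have coef_P : P`_K = a K * (gauss_binom_poly K)`_K.
  rewrite coef_sum big_ord_recr /= coefZ big1 ?add0r // => k _.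
  by rewrite coefZ nth_default ?mulr0 // size_gauss_binom_poly.
move/eqP: coef_P; rewrite P_eq0 coef0 eq_sym mulf_eq0.
by rewrite (negbTE (coef_gauss_binom_poly_neq0 K)) orbF => /eqP.
Qed.

Lemma gauss_binom_transform_eq0 (a : nat -> F) K B :
  (forall k, (K < k)%N -> a k = 0) ->
  (forall m, (B <= m)%N -> \sum_(k < m.+1) gauss_binom m k * a k = 0) ->
  forall k, a k = 0.
Proof.
move=> + transform0; elim: K => [|K IHK] a_supp.
  by case=> [|k]; [apply: gauss_binom_transform_top_eq0 transform0 | apply: a_supp].
apply: IHK => k; rewrite leq_eqVlt => /predU1P[<- | ]; last exact: a_supp.
exact: gauss_binom_transform_top_eq0 transform0.
Qed.

End GaussianBinomial.

Lemma prime_power_gt1 q : prime_power q -> (1 < q)%N.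
Proof. by case=> p [e [p_pr e_gt0 ->]]; rewrite -(exp1n e) ltn_exp2r ?prime_gt1. Qed.

Lemma natr_not_root1 (R : numDomainType) q : (1 < q)%N ->
  forall d, (0 < d)%N -> (q%:R : R) ^+ d != 1.
Proof. by move=> q_gt1 d_gt0; rewrite -natrX pnatr_eq1 -(expn0 q) eqn_exp2l -?lt0n. Qed.

Lemma not_unbounded_eventually (T : eqType) (a : T) (f : nat -> T) :
  ~ (forall m, exists2 n, (m < n)%N & f n != a) ->
  exists M, forall n, (M < n)%N -> f n = a.
Proof.
move=> not_unbounded; apply: NNPP => not_eventually; apply: not_unbounded => m.
apply: NNPP => no_witness; apply: not_eventually; exists m => n lt_mn.
by apply/eqP/negPn/negP => fn_neq; apply: no_witness; exists n.
Qed.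

Theorem proposition5p2 (R : realType) (q : nat) (f g : nat -> R[i]) :
  prime_power q ->
  (exists2 n : nat, (0 < n)%N & f n != 0) ->
  (exists2 n : nat, (0 < n)%N & g n != 0) ->
  (forall n : nat, (0 < n)%N ->
     g n = \sum_(1 <= k < n.+1) qbinom R q n.-1 k.-1 * f k) ->
  (forall m : nat, exists2 n : nat, (m < n)%N & f n != 0) \/
  (forall m : nat, exists2 n : nat, (m < n)%N & g n != 0).
Proof.
move=> /prime_power_gt1 q_gt1 [[//|n0] _ fn0] _ def_g.
have [f_unbounded | /not_unbounded_eventually [Mf f_supp]] :=
  classic (forall m, exists2 n, (m < n)%N & f n != 0); [by left | right].
apply: NNPP => /not_unbounded_eventually [Mg g_supp].
have q_neq0 : (q%:R : R[i]) != 0 by rewrite pnatr_eq0 -lt0n ltnW.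
have f_eq0 : forall k, f k.+1 = 0.
  apply: (@gauss_binom_transform_eq0 _ _ q_neq0 (natr_not_root1 _ q_gt1) _ Mf Mg).
    by move=> k lt_k; apply: f_supp k.+1 (ltnW lt_k).
  (* [qbinom R q] unfolds to [gauss_binom q%:R]. *)
  by move=> m le_m; rewrite -[RHS](g_supp m.+1) ?ltnS // def_g // big_add1 big_mkord.
by rewrite f_eq0 eqxx in fn0.
Qed.
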